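(* Let $(V,\mathcal{G})$ be an instance of $k$-\textsc{Compatible Ordering} with $\mathcal{G}=\{(A_1,B_1),\dots,(A_k,B_k)\}$. If there exists $i\in[k]$ such that the union of $A_i$ and $B_i$ is a directed acyclic graph, then $(V,\mathcal{G})$ is a yes-instance.
   Context: For a positive integer $k$, write $[k]=\{1,\dots,k\}$. An instance of $k$-\textsc{Compatible Ordering} consists of a finite vertex set $V$ with $n=|V|$ and a collection $\mathcal{G}$ of $k$ pairs of directed graphs $(A_1,B_1),\dots,(A_k,B_k)$ with $V(A_i)=V(B_i)=V$ for all $i\in[k]$. The instance is a yes-instance if and only if there exist an ordering $s_1,\dots,s_n$ of $V$ and labels $\ell_1,\dots,\ell_n\in[k]$ such that for every $i\in[n]$: (i) $s_i$ has no out-neighbor in $A_{\ell_i}$ among $s_{i+1},\dots,s_n$, and (ii) $s_i$ has no in-neighbor in $B_{\ell_i}$ among $s_1,\dots,s_{i-1}$. The union of $A_i$ and $B_i$ is the directed graph on $V$ whose arc set is the union of their arc sets. *)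

From mathcomp Require Import all_boot.
Set Implicit Arguments. Unset Strict Implicit. Unset Printing Implicit Defensive.

Definition dunion (V : finType) (A B : rel V) : rel V := fun x y => A x y || B x y.

Definition acyclic_digraph (V : finType) (e : rel V) : Prop :=
  forall x y, e x y -> ~~ connect e y x.

(* Yes-instance of k-Compatible Ordering: an ordering s_1..s_n of V
   (s : seq V, duplicate free, covering V) and labels l_1..l_n in [k]
   (here 'I_k, 0-based) such that for every position i:
   (i) s_i has no out-neighbour in A_{l_i} among later vertices,
   (ii) s_i has no in-neighbour in B_{l_i} among earlier vertices. *)
Definition compatible_ordering_yes (V : finType) (k : nat)
    (A B : 'I_k -> rel V) : Prop :=
  exists (s : seq V) (l : seq 'I_k),
    [/\ uniq s, (forall v : V, v \in s), size l = size s &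
     forall (i : nat) (v0 : V) (c0 : 'I_k), i < size s ->
       let si := nth v0 s i in let li := nth c0 l i in
       (forall j, i < j < size s -> ~~ A li si (nth v0 s j)) /\
       (forall j, j < i -> ~~ B li (nth v0 s j) si)].

From mathcomp Require Import all_boot.

(* If A_c ∪ B_c is acyclic, order V so that every arc of A_c ∪ B_c points
   backwards (sort by the number of vertices reachable from each vertex,
   which strictly drops along every arc) and label every vertex c: then no
   vertex has an A_c-arc to a later vertex nor a B_c-arc from an earlier one. *)

Section ReverseTopologicalOrder.

Variables (V : finType) (e : rel V).

Definition reach_card (x : V) : nat := #|[pred z | connect e x z]|.

Hypothesis e_acyclic : acyclic_digraph e.

Lemma reach_card_lt (x y : V) : e x y -> reach_card y < reach_card x.
Proof.
move=> exy; apply/proper_card/properP; split.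
  by apply/subsetP => z; rewrite !inE; apply/connect_trans/connect1.
by exists x; rewrite inE ?connect0 //; apply: e_acyclic.
Qed.

Lemma acyclic_reverse_topological_order :
  exists s : seq V, [/\ uniq s, forall v, v \in s &
    forall v0 i j, i < j < size s -> ~~ e (nth v0 s i) (nth v0 s j)].
Proof.
pose r := [rel a b | reach_card a <= reach_card b].
have r_total : total r by move=> a b; apply: leq_total.
have r_trans : transitive r by move=> a b d; apply: leq_trans.
have r_refl : reflexive r by move=> a; apply: leqnn.
set s := sort r (enum V).
have s_sorted : sorted r s := sort_sorted r_total _.
exists s; split.
- by rewrite sort_uniq enum_uniq.
- by move=> v; rewrite mem_sort mem_enum.
move=> v0 i j /andP[lt_ij lt_js]; apply/negP => /reach_card_lt.
rewrite ltnNge => /negP; apply.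
apply: (sorted_leq_nth r_trans r_refl v0 s_sorted); rewrite ?inE ?(ltnW lt_ij) //.
exact: ltn_trans lt_js.
Qed.

End ReverseTopologicalOrder.

Lemma compatible_ordering_yes_const_label (V : finType) (k : nat)
    (A B : 'I_k -> rel V) (c : 'I_k) (s : seq V) :
  uniq s -> (forall v, v \in s) ->
  (forall v0 i j, i < j < size s -> ~~ dunion (A c) (B c) (nth v0 s i) (nth v0 s j)) ->
  compatible_ordering_yes A B.
Proof.
move=> s_uniq s_total no_forward_arc.
exists s, (nseq (size s) c); split; rewrite ?size_nseq //.
move=> i v0 c0 lt_is /=; rewrite nth_nseq lt_is; split=> j ij.
  by have /norP[] := no_forward_arc v0 i j ij.
have ji_s : j < i < size s by rewrite ij.
by have /norP[] := no_forward_arc v0 j i ji_s.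
Qed.

Theorem corollary1 (V : finType) (k : nat) (A B : 'I_k -> rel V) :
  (exists i : 'I_k, acyclic_digraph (dunion (A i) (B i))) ->
  compatible_ordering_yes A B.
Proof.
move=> [c /acyclic_reverse_topological_order [s [s_uniq s_total no_forward_arc]]].
exact: compatible_ordering_yes_const_label s_uniq s_total no_forward_arc.
Qed.
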